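(* Let ${\bm L},{\bm L}_1,\dots,{\bm L}_n\in\mathbb{S}^d_{++}$ satisfy $\frac1n\sum_{i=1}^n\lambda_{\max}({\bm L}^{-1})\lambda_{\max}({\bm L}_i)\lambda_{\max}({\bm L}_i{\bm L}^{-1})=1$, let $p\in(0,1]$, $\alpha=\frac{1-p}{np}$, $\beta=\frac1n\sum_i\lambda_{\max}({\bm L}_i)\lambda_{\max}({\bm L}^{-1}{\bm L}_i)$, $\omega=\lambda_{\max}(\mathbb{E}[{\bm S}^2])-1$, and $${\bm D}^*_{{\bm L}^{-1}}=\frac{2}{1+\sqrt{1+4\alpha\beta\,\lambda_{\max}(\mathbb{E}[{\bm S}{\bm L}^{-1}{\bm S}]-{\bm L}^{-1})}}\;{\bm L}^{-1}.$$ Then $\beta\,\lambda_{\max}(\mathbb{E}[{\bm S}{\bm L}^{-1}{\bm S}]-{\bm L}^{-1})\le\omega$, and $$\frac{1}{\det({\bm D}^*_{{\bm L}^{-1}})^{1/d}}\le\lambda_{\max}({\bm L})\left(1+\sqrt{\frac{(1-p)\,\omega}{pn}}\right).$$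
   Context: $\mathbb{S}^d_{++}$: symmetric positive definite matrices; $\lambda_{\max}$: largest eigenvalue. ${\bm S}$ is a random symmetric positive semidefinite $d\times d$ matrix with $\mathbb{E}[{\bm S}]={\bm I}_d$ and finite second moments. *)

From HB Require Import structures.
From mathcomp Require Import all_boot all_order all_algebra.
From mathcomp Require Import all_classical all_reals all_analysis.
Set Implicit Arguments. Unset Strict Implicit. Unset Printing Implicit Defensive.
Import Order.TTheory GRing.Theory Num.Theory.
Local Open Scope ring_scope.
Local Open Scope classical_set_scope.

(* largest eigenvalue of a real square matrix: the supremum of its (real)
   eigenvalues (all matrices to which it is applied have real spectrum). *)
Definition lambda_max (R : realType) (d : nat) (A : 'M[R]_d) : R :=
  sup [set a : R | eigenvalue A a].

Definition spd (R : realType) (d : nat) (A : 'M[R]_d) : Prop :=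
  A^T = A /\ forall v : 'cV[R]_d, v != 0 -> 0 < (v^T *m A *m v) 0 0.

Definition spsd (R : realType) (d : nat) (A : 'M[R]_d) : Prop :=
  A^T = A /\ forall v : 'cV[R]_d, 0 <= (v^T *m A *m v) 0 0.

Definition mexpect (R : realType) (dT : measure_display) (T : measurableType dT)
  (P : probability T R) (d : nat) (X : T -> 'M[R]_d) : 'M[R]_d :=
  \matrix_(i, j) fine (\int[P]_x (X x i j)%:E)%E.

From HB Require Import structures.
From mathcomp Require Import all_boot all_order all_algebra.
From mathcomp Require Import all_classical all_reals all_analysis.
From mathcomp Require Import measurable_realfun complex spectral.
From mathcomp Require Import lra ring.
Set Implicit Arguments. Unset Strict Implicit. Unset Printing Implicit Defensive.
Import Order.TTheory GRing.Theory Num.Theory.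
Local Open Scope ring_scope.

(* Write M = L^-1 and mu = lambda_max M.  Since lambda_max (L_i M) = lambda_max (M L_i)
   (similar matrices), the normalisation says mu * beta = 1.  As E[S] = I,
   E[S M S] - M = E[(S - I) M (S - I)], and pointwise in the Loewner order
   (S - I) M (S - I) <= mu (S - I)^2, whose expectation is mu (E[S^2] - I); hence
   lambda_max (E[S M S] - M) <= mu * omega, i.e. beta * lam <= omega.
   For the second claim, det (c M)^(1/d) >= c / lambda_max L because
   det L <= lambda_max L ^ d, and 1/c = (1 + sqrt (1 + 4 alpha beta lam)) / 2
   <= 1 + sqrt (alpha omega) since sqrt (1 + 4 x) <= 1 + 2 sqrt x. *)

Section RealSymmetric.
Variable R : realType.
Local Notation C := R[i].
Local Notation fC := (real_complex R).
Local Open Scope sesquilinear_scope.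

Lemma mulmx_trmx_ge0 n (v : 'rV[R]_n) : 0 <= (v *m v^T) 0 0.
Proof. by rewrite mxE; apply: sumr_ge0 => k _; rewrite mxE -expr2 sqr_ge0. Qed.

Lemma mulmx_trmx_gt0 n (v : 'rV[R]_n) : v != 0 -> 0 < (v *m v^T) 0 0.
Proof.
move=> v0; rewrite lt_def mulmx_trmx_ge0 andbT; apply: contraNneq v0.
have sq_ge0 k : true -> 0 <= v 0 k * v^T k 0 by rewrite mxE -expr2 sqr_ge0.
rewrite mxE => /(psumr_eq0P sq_ge0) vk0; apply/eqP/rowP => k.
by have /eqP := vk0 k isT; rewrite !mxE mulf_eq0 orbb => /eqP.
Qed.

Lemma real_complex_real (x : R) : x%:C%C \is @Num.real C.
Proof.
rewrite realE !lecE /= eqxx /=.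
by case: (lerP 0 x) => // /ltW ->; rewrite orbT.
Qed.

Lemma map_real_complex_realmx m n (A : 'M[R]_(m, n)) : map_mx fC A \is a realmx.
Proof. by apply/mxOverP => i j; rewrite mxE real_complex_real. Qed.

Lemma symmetric_spectral n (A : 'M[R]_n) : A^T = A ->
  exists (Q : 'M[C]_n) (r : 'rV[R]_n), Q \is unitarymx /\
    map_mx fC A = invmx Q *m diag_mx (map_mx fC r) *m Q.
Proof.
move=> A_sym.
have AC_sym : map_mx fC A \is symmetricmx.
  apply/is_hermitianmxP; rewrite expr0 scale1r; apply/matrixP => i j.
  by rewrite !mxE -[in LHS]A_sym mxE.
have AC_herm := realsym_hermsym AC_sym (map_real_complex_realmx A).
exists (spectralmx (map_mx fC A)),
  (map_mx (@complex.Re R) (spectral_diag (map_mx fC A))).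
split; first exact: spectral_unitarymx.
have -> : map_mx fC (map_mx (@complex.Re R) (spectral_diag (map_mx fC A))) =
          spectral_diag (map_mx fC A).
  apply/matrixP => i j; rewrite !mxE.
  have := mxOverP (hermitian_spectral_diag_real AC_herm) i j.
  case: (spectral_diag _ i j) => a b; rewrite realE !lecE /=.
  by case/orP => /andP [/eqP hb _]; [rewrite hb | rewrite -hb].
exact/orthomx_spectralP/(hermitian_normalmx AC_herm).
Qed.

Lemma diag_quad_le n (x : 'rV[R]_n) (m : R) (w : 'rV[C]_n) :
  (forall j, x 0 j <= m) ->
  (w *m diag_mx (map_mx fC x) *m w^t*) 0 0 <= fC m * (w *m w^t*) 0 0.
Proof.
move=> xm; rewrite mul_mx_diag !mxE mulr_sumr; apply: ler_sum => j _.
rewrite !mxE mulrA mulrAC -[X in _ <= X]mulrA [X in _ <= X]mulrC.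
by rewrite ler_wpM2l ?mul_conjC_ge0 ?lecR.
Qed.

Section SpectralDecomposition.
Variables (n : nat) (A : 'M[R]_n) (Q : 'M[C]_n) (r : 'rV[R]_n).
Hypotheses (Q_unitary : Q \is unitarymx)
  (A_spectral : map_mx fC A = invmx Q *m diag_mx (map_mx fC r) *m Q).

Let Q_unit : Q \in unitmx. Proof. exact: unitarymx_unit. Qed.

Lemma eigenvalue_spectral a : eigenvalue A a <-> exists i, a = r 0 i.
Proof.
split.
  move=> /eigenvalueP [v hv v0].
  set w := map_mx fC v *m invmx Q.
  have hw : w *m diag_mx (map_mx fC r) = fC a *: w.
    have := congr1 (map_mx fC) hv; rewrite map_mxM map_mxZ A_spectral.
    move=> /(congr1 (fun X => X *m invmx Q)).
    by rewrite !mulmxA mulmxK // -scalemxAl.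
  have w0 : w != 0.
    apply: contraNneq v0 => hw0.
    have : map_mx fC v = w *m Q by rewrite /w mulmxKV.
    by rewrite hw0 mul0mx => /eqP; rewrite map_mx_eq0.
  have [i wi0] : exists i, w 0 i != 0.
    apply/existsP; apply: contraNT w0 => /existsPn wi0.
    by apply/eqP/rowP => i; have /negbNE/eqP -> := wi0 i; rewrite mxE.
  exists i; apply: (@complexI R); clearbody w.
  move/rowP: hw => /(_ i); rewrite mul_mx_diag !mxE.
  by rewrite [RHS]mulrC => /(mulfI wi0) ->.
case=> i ->.
rewrite eigenvalue_root_char -(fmorph_root fC) map_char_poly -eigenvalue_root_char.
apply/eigenvalueP; exists (delta_mx 0 i *m Q).
  rewrite A_spectral !mulmxA mulmxK // scalemxAl; congr (_ *m _).
  apply/matrixP => k l; rewrite mul_mx_diag !mxE mulrC.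
  by case: (l =P i) => [->|_] //; rewrite andbF /= !mulr0.
apply: contraTneq isT => h.
have : delta_mx 0 i = 0 :> 'M[C]_(1, n).
  by rewrite -[delta_mx _ _](mulmxK Q_unit) h mul0mx.
by move/matrixP => /(_ 0 i); rewrite !mxE !eqxx /= => /eqP; rewrite oner_eq0.
Qed.

Lemma lambda_max_spectral : (0 < n)%N ->
  exists i, lambda_max A = r 0 i /\ forall j, r 0 j <= r 0 i.
Proof.
move=> n_gt0.
case: (@arg_maxP _ _ _ (Ordinal n_gt0) xpredT (fun i => r 0 i) isT) => i _ hi.
have ub a : eigenvalue A a -> a <= r 0 i.
  by move=> /eigenvalue_spectral [j ->]; exact: hi.
have Ai : eigenvalue A (r 0 i) by apply/eigenvalue_spectral; exists i.
exists i; split; last by move=> j; exact: hi.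
apply/eqP; rewrite eq_le; apply/andP; split.
  by apply: ge_sup; [exists (r 0 i) | exact: ub].
by apply: ub_le_sup => //; exists (r 0 i) => a; exact: ub.
Qed.

Lemma quad_le_spectral (v : 'rV[R]_n) (m : R) : (forall j, r 0 j <= m) ->
  (v *m A *m v^T) 0 0 <= m * (v *m v^T) 0 0.
Proof.
move=> rm; set u := map_mx fC v; set w := u *m Q^t*.
have uT : map_mx fC v^T = u^t* by rewrite map_trmx realmxC ?map_real_complex_realmx.
have wT : w^t* = Q *m u^t* by rewrite /w trmx_mul map_mxM trmxCK.
have quadA : fC ((v *m A *m v^T) 0 0) = (w *m diag_mx (map_mx fC r) *m w^t*) 0 0.
  transitivity (map_mx fC (v *m A *m v^T) 0 0); first by rewrite [RHS]mxE.
  by rewrite !map_mxM A_spectral invmx_unitary // uT wT !mulmxA.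
have quad1 : fC ((v *m v^T) 0 0) = (w *m w^t*) 0 0.
  transitivity (map_mx fC (v *m v^T) 0 0); first by rewrite [RHS]mxE.
  by rewrite map_mxM uT wT mulmxA mulmxKtV.
by have := diag_quad_le w rm; rewrite -quadA -quad1 -rmorphM lecR.
Qed.

Lemma det_spectral : \det A = \prod_j r 0 j.
Proof.
apply: (@complexI R).
have detQ : \det Q != 0 by have := Q_unit; rewrite unitmxE unitfE.
rewrite rmorph_prod -det_map_mx A_spectral !det_mulmx det_inv det_diag mulrAC.
by rewrite mulVf // mul1r; apply: eq_bigr => j _; rewrite mxE.
Qed.

End SpectralDecomposition.

End RealSymmetric.

Section LambdaMax.
Variables (R : realType) (n : nat).
Implicit Types (A B : 'M[R]_n) (v : 'rV[R]_n).

Lemma eigenvalue_lambda_max A : (0 < n)%N -> A^T = A -> eigenvalue A (lambda_max A).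
Proof.
move=> n_gt0 /symmetric_spectral [Q [r [hQ hA]]].
have [i [-> _]] := lambda_max_spectral hQ hA n_gt0.
by apply/(eigenvalue_spectral hQ hA); exists i.
Qed.

Lemma quad_le_lambda_max A v : (0 < n)%N -> A^T = A ->
  (v *m A *m v^T) 0 0 <= lambda_max A * (v *m v^T) 0 0.
Proof.
move=> n_gt0 /symmetric_spectral [Q [r [hQ hA]]].
have [i [-> ri]] := lambda_max_spectral hQ hA n_gt0.
by have := quad_le_spectral hQ hA v ri.
Qed.

Lemma lambda_max_le_quad A (c : R) : (0 < n)%N -> A^T = A ->
  (forall v, (v *m A *m v^T) 0 0 <= c * (v *m v^T) 0 0) -> lambda_max A <= c.
Proof.
move=> n_gt0 A_sym quad_le.
have /eigenvalueP [v Av v0] := eigenvalue_lambda_max n_gt0 A_sym.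
have := quad_le v; rewrite Av -scalemxAl mxE.
by rewrite ler_pM2r // mulmx_trmx_gt0.
Qed.

Lemma spd_eigenvalue_gt0 A a : spd A -> eigenvalue A a -> 0 < a.
Proof.
move=> [_ A_pos] /eigenvalueP [v Av v0].
have := A_pos v^T; rewrite trmx_eq0 trmxK => /(_ v0).
by rewrite Av -scalemxAl mxE pmulr_lgt0 // mulmx_trmx_gt0.
Qed.

Lemma spd_lambda_max_gt0 A : (0 < n)%N -> spd A -> 0 < lambda_max A.
Proof.
by move=> n_gt0 A_spd; exact: spd_eigenvalue_gt0 (eigenvalue_lambda_max n_gt0 A_spd.1).
Qed.

Lemma spd_det_gt0 A : spd A -> 0 < \det A.
Proof.
move=> A_spd; have [Q [r [hQ hA]]] := symmetric_spectral A_spd.1.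
rewrite (det_spectral hQ hA); apply: prodr_gt0 => j _.
by apply: spd_eigenvalue_gt0 A_spd _; apply/(eigenvalue_spectral hQ hA); exists j.
Qed.

Lemma spd_det_le_lambda_max A : (0 < n)%N -> spd A -> \det A <= lambda_max A ^+ n.
Proof.
move=> n_gt0 A_spd; have [Q [r [hQ hA]]] := symmetric_spectral A_spd.1.
have [i [-> ri]] := lambda_max_spectral hQ hA n_gt0.
rewrite (det_spectral hQ hA) -[n in _ ^+ n]card_ord -prodr_const.
apply: ler_prod => j _; rewrite ri andbT; apply/ltW.
by apply: spd_eigenvalue_gt0 A_spd _; apply/(eigenvalue_spectral hQ hA); exists j.
Qed.

Lemma spd_invmx A : spd A -> spd (invmx A).
Proof.
move=> [A_sym A_pos]; have A_unit : A \in unitmx.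
  by rewrite unitmxE unitfE gt_eqF // spd_det_gt0.
have Ai_sym : (invmx A)^T = invmx A by rewrite trmx_inv A_sym.
split=> // v v0.
have Aiv0 : invmx A *m v != 0.
  by apply: contraNneq v0 => h; rewrite -[v](mulKVmx A_unit) h mulmx0.
have := A_pos _ Aiv0; rewrite trmx_mul Ai_sym.
by rewrite -[v^T *m _ *m A]mulmxA mulVmx // mulmx1 mulmxA.
Qed.

Lemma eigenvalue_mulmxC A B a : B \in unitmx ->
  eigenvalue (A *m B) a -> eigenvalue (B *m A) a.
Proof.
move=> B_unit /eigenvalueP [v Av v0]; apply/eigenvalueP.
exists (v *m invmx B).
  by rewrite mulmxA mulmxKV // scalemxAl -Av mulmxA mulmxK.
by apply: contraNneq v0 => h; rewrite -[v](mulmxKV B_unit) h mul0mx.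
Qed.

Lemma lambda_max_mulmxC A B : B \in unitmx ->
  lambda_max (A *m B) = lambda_max (B *m A).
Proof.
move=> B_unit; rewrite /lambda_max; congr sup; apply: funext => a.
apply: propext; split; first exact: eigenvalue_mulmxC.
have Bi_unit : invmx B \in unitmx by rewrite unitmx_inv.
have := @eigenvalue_mulmxC (B *m A *m B) (invmx B) a Bi_unit.
by rewrite -!mulmxA mulmxV // mulmx1 mulKmx.
Qed.

End LambdaMax.

Lemma centered_conjE (R : pzRingType) n (A M : 'M[R]_n) :
  (A - 1%:M) *m M *m (A - 1%:M) = A *m M *m A - M *m A - (A *m M - M).
Proof. by rewrite mulmxBl mulmxBr mulmxBl mul1mx mulmx1. Qed.

Section Expectation.
Context {R : realType} {dT : measure_display} {T : measurableType dT}
  (P : probability T R).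

Local Notation integrable f := (P.-integrable setT (fun x => (f x)%:E)).

Definition rexpect (f : T -> R) : R := fine (\int[P]_x (f x)%:E)%E.

(* On square matrices [mexpect P] is [mxexpect] by conversion. *)
Definition mxexpect m n (X : T -> 'M[R]_(m, n)) : 'M[R]_(m, n) :=
  \matrix_(i, j) rexpect (fun x => X x i j).

Definition mx_integrable m n (X : T -> 'M[R]_(m, n)) : Prop :=
  forall i j, integrable (fun x => X x i j).

Lemma rexpectZ c f : integrable f -> rexpect (fun x => c * f x) = c * rexpect f.
Proof.
move=> hf; rewrite /rexpect.
rewrite (_ : c = fine c%:E) // -fineM // ?integrable_fin_num //.
by rewrite -integralZl.
Qed.

Lemma integrableZ c f : integrable f -> integrable (fun x => c * f x).
Proof.
by move=> hf; apply: eq_integrable (integrableZl measurableT c hf) => // x _.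
Qed.

Lemma rexpectB f g : integrable f -> integrable g ->
  rexpect (fun x => f x - g x) = rexpect f - rexpect g.
Proof.
move=> hf hg; rewrite /rexpect -fineB; try exact: integrable_fin_num.
by rewrite -integralB_EFin.
Qed.

Lemma rexpect_cst c : rexpect (fun=> c) = c.
Proof. by rewrite /rexpect integral_cst //= probability_setT mule1. Qed.

Lemma ler_rexpect f g : integrable f -> integrable g ->
  (forall x, f x <= g x) -> rexpect f <= rexpect g.
Proof.
move=> hf hg hfg; apply: fine_le; try exact: integrable_fin_num.
by apply: le_integral => // x _; rewrite lee_fin.
Qed.

Lemma integrable_lincomb (I : finType) (c : I -> R) (f : I -> T -> R) :
  (forall k, integrable (f k)) -> integrable (fun x => \sum_k c k * f k x).
Proof.
move=> hf; have := @integrable_sum _ _ _ P _ measurableT _ (index_enum I) xpredT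
  (fun k x => (c k)%:E * (f k x)%:E)%E (fun k _ => integrableZl measurableT (c k) (hf k)).
by apply: eq_integrable => // x _; rewrite sumEFin.
Qed.

Lemma rexpect_lincomb (I : finType) (c : I -> R) (f : I -> T -> R) :
  (forall k, integrable (f k)) ->
  rexpect (fun x => \sum_k c k * f k x) = \sum_k c k * rexpect (f k).
Proof.
move=> hf; rewrite /rexpect.
rewrite (_ : (\int[P]_x _)%E = \int[P]_x (\sum_k (c k)%:E * (f k x)%:E))%E; last first.
  by apply: eq_integral => x _; rewrite sumEFin.
rewrite integral_sum //; last by move=> k; exact: integrableZl.
rewrite (eq_bigr (fun k => (c k * rexpect (f k))%:E)) ?sumEFin // => k _.
by rewrite integralZl // /rexpect EFinM fineK // integrable_fin_num.
Qed.


Lemma mx_integrableB m n (X Y : T -> 'M[R]_(m, n)) :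
  mx_integrable X -> mx_integrable Y -> mx_integrable (fun x => X x - Y x).
Proof.
move=> hX hY i j.
apply: eq_integrable (integrableB measurableT (hX i j) (hY i j)) => // x _.
by rewrite !mxE EFinB.
Qed.

Lemma mx_integrable_cst m n (A : 'M[R]_(m, n)) : mx_integrable (fun=> A).
Proof. by move=> i j; exact: finite_measure_integrable_cst. Qed.

Lemma mx_integrable_mulmxl m n p (A : 'M[R]_(m, n)) (X : T -> 'M[R]_(n, p)) :
  mx_integrable X -> mx_integrable (fun x => A *m X x).
Proof.
move=> hX i j; apply: eq_integrable (integrable_lincomb (A i) (hX^~ j)) => // x _.
by rewrite mxE.
Qed.

Lemma mx_integrable_mulmxr m n p (X : T -> 'M[R]_(m, n)) (B : 'M[R]_(n, p)) :
  mx_integrable X -> mx_integrable (fun x => X x *m B).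
Proof.
move=> hX i j; apply: eq_integrable (integrable_lincomb (B^~ j) (hX i)) => // x _.
by rewrite mxE; under eq_bigr do rewrite mulrC.
Qed.

Lemma trmx_mxexpect m n (X : T -> 'M[R]_(m, n)) :
  (mxexpect X)^T = mxexpect (fun x => (X x)^T).
Proof.
by apply/matrixP => i j; rewrite !mxE; congr rexpect; apply: funext => x; rewrite mxE.
Qed.

Lemma mxexpectB m n (X Y : T -> 'M[R]_(m, n)) :
  mx_integrable X -> mx_integrable Y ->
  mxexpect (fun x => X x - Y x) = mxexpect X - mxexpect Y.
Proof.
move=> hX hY; apply/matrixP => i j; rewrite !mxE -rexpectB //.
by congr rexpect; apply: funext => x; rewrite !mxE.
Qed.

Lemma mxexpect_cst m n (A : 'M[R]_(m, n)) : mxexpect (fun=> A) = A.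
Proof. by apply/matrixP => i j; rewrite mxE rexpect_cst. Qed.

Lemma mxexpect_mulmxl m n p (A : 'M[R]_(m, n)) (X : T -> 'M[R]_(n, p)) :
  mx_integrable X -> mxexpect (fun x => A *m X x) = A *m mxexpect X.
Proof.
move=> hX; apply/matrixP => i j; rewrite !mxE.
under eq_bigr do rewrite mxE.
rewrite -rexpect_lincomb //; congr rexpect; apply: funext => x; exact: mxE.
Qed.

Lemma mxexpect_mulmxr m n p (X : T -> 'M[R]_(m, n)) (B : 'M[R]_(n, p)) :
  mx_integrable X -> mxexpect (fun x => X x *m B) = mxexpect X *m B.
Proof.
move=> hX; apply/matrixP => i j; rewrite !mxE.
under eq_bigr do rewrite mxE mulrC.
rewrite -rexpect_lincomb //; congr rexpect; apply: funext => x.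
by rewrite mxE; under eq_bigr do rewrite mulrC.
Qed.

Lemma quad_mxexpect n (X : T -> 'M[R]_n) (v : 'rV[R]_n) : mx_integrable X ->
  (v *m mxexpect X *m v^T) 0 0 = rexpect (fun x => (v *m X x *m v^T) 0 0).
Proof.
move=> hX; rewrite -mxexpect_mulmxl // -mxexpect_mulmxr ?mxE //.
exact: mx_integrable_mulmxl.
Qed.

Lemma integrable_quad n (X : T -> 'M[R]_n) (v : 'rV[R]_n) : mx_integrable X ->
  integrable (fun x => (v *m X x *m v^T) 0 0).
Proof. by move=> hX; apply: mx_integrable_mulmxr; exact: mx_integrable_mulmxl. Qed.

Lemma integrable_mul_sq (f g : T -> R) :
  measurable_fun setT f -> measurable_fun setT g ->
  integrable (fun x => f x ^+ 2) -> integrable (fun x => g x ^+ 2) ->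
  integrable (fun x => f x * g x).
Proof.
move=> mf mg f2 g2.
apply: le_integrable (integrableD measurableT f2 g2) => //.
  by apply/measurable_EFinP; exact: measurable_funM.
move=> x _; rewrite -EFinD !abse_EFin lee_fin.
rewrite [X in _ <= X]ger0_norm ?addr_ge0 ?sqr_ge0 // normrM.
rewrite -(real_normK (num_real (f x))) -(real_normK (num_real (g x))).
have := sqr_ge0 (`|f x| - `|g x|); rewrite sqrrB.
have := mulr_ge0 (normr_ge0 (f x)) (normr_ge0 (g x)); lra.
Qed.

Section SecondMoment.
Variables (d : nat) (S : T -> 'M[R]_d).
Hypotheses (S_meas : forall i j, measurable_fun setT (fun x => S x i j))
  (S_sq : forall i j, integrable (fun x => S x i j ^+ 2)).

Lemma mx_integrable_S : mx_integrable S.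
Proof.
move=> i j.
have one_meas : measurable_fun setT (cst 1 : T -> R) by exact: measurable_cst.
have one_sq : integrable (fun x => cst (1 : R) x ^+ 2).
  exact: (finite_measure_integrable_cst P (1 ^+ 2)).
apply: eq_integrable (integrable_mul_sq (S_meas i j) one_meas (S_sq i j) one_sq) => // x _.
by rewrite mulr1.
Qed.

Lemma mx_integrable_conj (M : 'M[R]_d) : mx_integrable (fun x => S x *m M *m S x).
Proof.
move=> i j.
have SS p : integrable (fun x => S x i p.2 * S x p.1 j).
  exact: integrable_mul_sq.
apply: eq_integrable (integrable_lincomb (fun p => M p.2 p.1) SS) => // x _.
congr EFin; rewrite -(pair_bigA _ (fun l k => M k l * (S x i k * S x l j))) /=.
rewrite mxE; apply: eq_bigr => l _; rewrite mxE big_distrl; apply: eq_bigr => k _ /=.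
by rewrite mulrCA mulrA.
Qed.

Lemma mx_integrable_centered_conj (M : 'M[R]_d) :
  mx_integrable (fun x => (S x - 1%:M) *m M *m (S x - 1%:M)).
Proof.
rewrite (funext (fun x => centered_conjE (S x) M)).
have S_int := mx_integrable_S.
apply: mx_integrableB.
  exact: mx_integrableB (mx_integrable_conj M) (mx_integrable_mulmxl M S_int).
exact: mx_integrableB (mx_integrable_mulmxr M S_int) (mx_integrable_cst M).
Qed.

Hypothesis S_mean : mxexpect S = 1%:M.

Lemma mxexpect_centered_conj (M : 'M[R]_d) :
  mxexpect (fun x => (S x - 1%:M) *m M *m (S x - 1%:M)) =
  mxexpect (fun x => S x *m M *m S x) - M.
Proof.
have S_int := mx_integrable_S.
have SM_int := mx_integrable_mulmxr M S_int.
have MS_int := mx_integrable_mulmxl M S_int.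
rewrite (funext (fun x => centered_conjE (S x) M)).
rewrite (mxexpectB (mx_integrableB (mx_integrable_conj M) MS_int)
                   (mx_integrableB SM_int (mx_integrable_cst M))).
rewrite (mxexpectB (mx_integrable_conj M) MS_int).
rewrite (mxexpectB SM_int (mx_integrable_cst M)) mxexpect_mulmxl // mxexpect_mulmxr //.
by rewrite mxexpect_cst S_mean mulmx1 mul1mx subrr subr0.
Qed.

Hypothesis S_sym : forall x, (S x)^T = S x.

Lemma lambda_max_mxexpect_conj_le (M : 'M[R]_d) : (0 < d)%N -> spd M ->
  lambda_max (mxexpect (fun x => S x *m M *m S x) - M) <=
  lambda_max M * (lambda_max (mxexpect (fun x => S x *m S x)) - 1).
Proof.
move=> d_gt0 M_spd; have [M_sym _] := M_spd.
have mxexpect_sym (X : T -> 'M[R]_d) :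
    (forall x, (X x)^T = X x) -> (mxexpect X)^T = mxexpect X.
  by move=> X_sym; rewrite trmx_mxexpect; congr mxexpect; apply: funext.
have Y_sym x : (S x - 1%:M)^T = S x - 1%:M by rewrite linearB /= trmx1 S_sym.
have SS1 : (fun x => S x *m S x) = (fun x => S x *m 1%:M *m S x).
  by apply: funext => x; rewrite mulmx1.
have B_sym : (mxexpect (fun x => S x *m S x))^T = mxexpect (fun x => S x *m S x).
  by apply: mxexpect_sym => x; rewrite trmx_mul S_sym.
have subE (X Y : 'M[R]_1) : (X - Y) 0 0 = X 0 0 - Y 0 0 by rewrite !mxE.
rewrite -mxexpect_centered_conj.
apply: lambda_max_le_quad => // [|v].
  by apply: mxexpect_sym => x; rewrite !trmx_mul Y_sym M_sym mulmxA.
have mu_ge0 := ltW (spd_lambda_max_gt0 d_gt0 M_spd).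
rewrite quad_mxexpect; last exact: mx_integrable_centered_conj.
apply: le_trans (ler_rexpect _ _ (g := fun x => lambda_max M *
    (v *m ((S x - 1%:M) *m 1%:M *m (S x - 1%:M)) *m v^T) 0 0) _) _.
- exact/integrable_quad/mx_integrable_centered_conj.
- exact/integrableZ/integrable_quad/mx_integrable_centered_conj.
- move=> x; have := quad_le_lambda_max (v *m (S x - 1%:M)) d_gt0 M_sym.
  by rewrite trmx_mul Y_sym mulmx1 !mulmxA.
rewrite rexpectZ; last exact/integrable_quad/mx_integrable_centered_conj.
rewrite -quad_mxexpect; last exact: mx_integrable_centered_conj.
rewrite mxexpect_centered_conj -SS1.
rewrite -mulrA ler_wpM2l // mulmxBr mulmxBl mulmx1 subE mulrBl mul1r lerD2r.
exact: quad_le_lambda_max.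
Qed.

End SecondMoment.

End Expectation.

Lemma half_1Dsqrt_1D4_le (R : rcfType) (y z : R) : y <= z ->
  (1 + Num.sqrt (1 + 4 * y)) / 2 <= 1 + Num.sqrt z.
Proof.
move=> yz; have sz_ge0 := sqrtr_ge0 z.
have sy_le : Num.sqrt (1 + 4 * y) <= Num.sqrt (1 + 4 * z) by apply: ler_wsqrtr; lra.
suff : Num.sqrt (1 + 4 * z) <= 1 + 2 * Num.sqrt z by lra.
have [z_ge0|z_lt0] := lerP 0 z.
  rewrite -[X in _ <= X]ger0_norm -?sqrtr_sqr; last lra.
  by apply: ler_wsqrtr; have := sqr_sqrtr z_ge0; nra.
have : Num.sqrt (1 + 4 * z) <= Num.sqrt 1 by apply: ler_wsqrtr; lra.
rewrite sqrtr1; lra.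
Qed.

Lemma inv_root_det_scale_invmx_le (R : realType) n (L : 'M[R]_n) (c : R) :
  (0 < n)%N -> spd L -> 0 < c ->
  (powR (\det (c *: invmx L)) n%:R^-1)^-1 <= c^-1 * lambda_max L.
Proof.
move=> n_gt0 L_spd c_gt0; have c_ge0 := ltW c_gt0.
have detL_ge0 := ltW (spd_det_gt0 L_spd).
have lL_ge0 := ltW (spd_lambda_max_gt0 n_gt0 L_spd).
have root_expn (y : R) : 0 <= y -> (y ^+ n) `^ n%:R^-1 = y.
  by move=> y_ge0; rewrite -powR_mulrn // -powRrM divff ?powRr1 // pnatr_eq0 -lt0n.
rewrite detZ det_inv powRM ?exprn_ge0 ?invr_ge0 // root_expn //.
rewrite -(powR_inv1 detL_ge0) -powRrM mulN1r powRN invfM invrK.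
rewrite ler_wpM2l ?invr_ge0 // -[X in _ <= X](root_expn _ lL_ge0).
apply: ge0_ler_powR; rewrite ?invr_ge0 ?nnegrE ?exprn_ge0 //.
exact: spd_det_le_lambda_max.
Qed.

Theorem corollary3 (R : realType) (dT : measure_display) (T : measurableType dT)
  (P : probability T R) (d n : nat) (hd : (0 < d)%N) (hn : (0 < n)%N)
  (S : T -> 'M[R]_d)
  (S_meas : forall i j, measurable_fun setT (fun x => S x i j))
  (S_sq : forall i j, P.-integrable setT (fun x => ((S x i j) ^+ 2)%:E))
  (S_psd : forall x, spsd (S x))
  (S_mean : mexpect P S = 1%:M)
  (L : 'M[R]_d) (Ls : 'I_n -> 'M[R]_d)
  (hL : spd L) (hLs : forall i, spd (Ls i))
  (hnorm : n%:R^-1 * \sum_(i < n) lambda_max (invmx L) * lambda_max (Ls i)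
              * lambda_max (Ls i *m invmx L) = 1)
  (p : R) (hp0 : 0 < p) (hp1 : p <= 1) :
  let alpha := (1 - p) / (n%:R * p) in
  let beta := n%:R^-1 * \sum_(i < n) lambda_max (Ls i) * lambda_max (invmx L *m Ls i) in
  let omega := lambda_max (mexpect P (fun x => S x *m S x)) - 1 in
  let lam := lambda_max (mexpect P (fun x => S x *m invmx L *m S x) - invmx L) in
  let Dstar := (2 / (1 + Num.sqrt (1 + 4 * alpha * beta * lam))) *: invmx L in
  beta * lam <= omega /\
  (powR (\det Dstar) (d%:R^-1))^-1
    <= lambda_max L * (1 + Num.sqrt ((1 - p) * omega / (p * n%:R))).
Proof.
move=> alpha beta omega lam Dstar.
have Li_spd := spd_invmx hL.
have Li_unit : invmx L \in unitmx by rewrite unitmx_inv unitmxE unitfE gt_eqF ?spd_det_gt0.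
have mu_gt0 := spd_lambda_max_gt0 hd Li_spd.
set mu := lambda_max (invmx L) in hnorm mu_gt0 *.
have mu_beta : mu * beta = 1.
  rewrite -hnorm /beta mulrCA mulr_sumr; congr (_ * _); apply: eq_bigr => i _.
  by rewrite lambda_max_mulmxC // mulrA.
have beta_gt0 : 0 < beta by rewrite -(pmulr_rgt0 beta mu_gt0) mu_beta.
have lam_le : lam <= mu * omega :=
  lambda_max_mxexpect_conj_le S_meas S_sq S_mean (fun x => (S_psd x).1) hd Li_spd.
have beta_lam : beta * lam <= omega.
  have := ler_wpM2l (ltW beta_gt0) lam_le.
  by rewrite mulrA [beta * mu]mulrC mu_beta mul1r.
split=> //.
have alpha_ge0 : 0 <= alpha by rewrite divr_ge0 ?subr_ge0 // mulr_ge0 // ltW.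
have z_le : alpha * beta * lam <= (1 - p) * omega / (p * n%:R).
  have -> : (1 - p) * omega / (p * n%:R) = alpha * omega.
    by rewrite /alpha; field; rewrite pnatr_eq0 -lt0n hn gt_eqF.
  by rewrite -mulrA ler_wpM2l.
have c_gt0 : 0 < 2 / (1 + Num.sqrt (1 + 4 * alpha * beta * lam)).
  by rewrite divr_gt0 ?ltr_pwDl ?sqrtr_ge0.
apply: le_trans (inv_root_det_scale_invmx_le hd hL c_gt0) _.
have lL_ge0 := ltW (spd_lambda_max_gt0 hd hL).
rewrite invf_div mulrC ler_wpM2l //.
by have := half_1Dsqrt_1D4_le z_le; rewrite !mulrA.
Qed.
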